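(* Let $I\in\mathbb{I}_{2,n}$. Then the ss-compressed category $\mathcal{C}^{ss}_I$ is isomorphic to the path category (with no relations) of a quiver of one of the following five forms: a single vertex; $\bullet\to\bullet$; $\bullet\to\bullet\leftarrow\bullet$; $\bullet\leftarrow\bullet\to\bullet$; $\bullet\to\bullet\leftarrow\bullet\to\bullet$. In particular $\mathcal{C}^{ss}_I$ is of finite representation type (Dynkin type $A_k$ with $k\le 4$).
   Context: Fix a field $K$. $G_{2,n}$ is the equioriented commutative $2\times n$ grid: the quiver with vertex set $\{(i,j):1\le i\le 2,\ 1\le j\le n\}$ and arrows $(i,j)\to(i,j+1)$ and $(1,j)\to(2,j)$, bound by all commutativity relations. An interval of $G_{2,n}$ is a nonempty full subquiver $I$ which is connected (as an undirected graph) and convex (whenever $x,y\in I_0$ and there are paths $x\to z$, $z\to y$ in $G_{2,n}$, then $z\in I_0$); $\mathbb{I}_{2,n}$ is the set of intervals. $I^{ss}_0$ is the set of vertices of $I$ that are sources or sinks of the quiver $I$. $KG_{2,n}$ is the $K$-linear category whose objects are vertices and morphisms are $K$-linear combinations of paths modulo commutativity relations; $\mathcal{C}^{ss}_I$ is its full subcategory on $I^{ss}_0$. *)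

From HB Require Import structures.
From mathcomp Require Import all_boot all_order all_algebra.
Set Implicit Arguments. Unset Strict Implicit. Unset Printing Implicit Defensive.
Import GRing.Theory.
Local Open Scope ring_scope.

(* Small K-linear categories with finitely many objects and           *)
(* finite-dimensional Hom spaces; Hom(x,y) is given in coordinates    *)
(* as the row space 'rV[K]_(dim x y) (w.r.t. a chosen basis).         *)
(* comp g f is the composite "g after f" (f : x -> y, g : y -> z).     *)
Record linCat (K : fieldType) := LinCat {
  obj : finType;
  dim : obj -> obj -> nat;
  comp : forall x y z : obj, 'rV[K]_(dim y z) -> 'rV[K]_(dim x y) -> 'rV[K]_(dim x z);
  idm : forall x : obj, 'rV[K]_(dim x x)
}.

Definition cat_iso (K : fieldType) (C D : linCat K) : Prop :=
  exists phi : obj C -> obj D, bijective phi /\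
  exists F : forall x y : obj C, 'rV[K]_(dim x y) -> 'rV[K]_(dim (phi x) (phi y)),
    [/\ (forall x y, bijective (F x y)),
        (forall x y (a : K) u v, F x y (a *: u + v) = a *: F x y u + F x y v),
        (forall x y z (g : 'rV[K]_(dim y z)) (f : 'rV[K]_(dim x y)),
            F x z (comp g f) = comp (F y z g) (F x y f)) &
        (forall x, F x x (idm x) = idm (phi x))].

Definition fullSub (K : fieldType) (C : linCat K) (S : {set obj C}) : linCat K :=
  @LinCat K {x : obj C | x \in S}
    (fun x y => dim (val x) (val y))
    (fun x y z g f => comp g f)
    (fun x => idm (val x)).

(* Vertex (i,j) of the paper (1<=i<=2, 1<=j<=n) is (i-1, j-1).         *)
Definition gvert (n : nat) := ('I_2 * 'I_n)%type.

Definition garr (n : nat) : rel (gvert n) := fun x y =>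
  ((x.1 == y.1) && (val y.2 == (val x.2).+1)) ||
  ((val x.1 == 0%N) && (val y.1 == 1%N) && (x.2 == y.2)).

Definition gpath (n : nat) (x y : gvert n) : bool := connect (@garr n) x y.

Definition is_interval (n : nat) (I : {set gvert n}) : Prop :=
  [/\ I != set0,
      (forall x y, x \in I -> y \in I ->
         connect [rel a b | [&& a \in I, b \in I & garr a b || garr b a]] x y) &
      (forall x y z, x \in I -> y \in I -> gpath x z -> gpath z y -> z \in I)].

Definition is_source (n : nat) (I : {set gvert n}) (v : gvert n) : bool :=
  [forall u, (u \in I) ==> ~~ garr u v].
Definition is_sink (n : nat) (I : {set gvert n}) (v : gvert n) : bool :=
  [forall u, (u \in I) ==> ~~ garr v u].
Definition Iss (n : nat) (I : {set gvert n}) : {set gvert n} :=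
  [set v in I | is_source I v || is_sink I v].

(* The K-linear category KG_{2,n}: paths modulo all commutativity
   relations, so Hom(x,y) has basis the single class of paths x -> y
   if one exists (dimension 1), and is 0 otherwise; composition is
   concatenation of (classes of) paths. *)
Definition KG (K : fieldType) (n : nat) : linCat K :=
  @LinCat K (gvert n)
    (fun x y => nat_of_bool (gpath x y))
    (fun x y z g f => \row_(k < gpath x z)
        \sum_(i < gpath y z) \sum_(j < gpath x y) g 0 i * f 0 j)
    (fun x => const_mx 1).

Definition Css (K : fieldType) (n : nat) (I : {set gvert n}) : linCat K :=
  @fullSub K (KG K n) (Iss I).

(* A quiver: qv vertices 0..qv-1 and a list of arrows (source,target). *)
(* Paths are sequences of arrow indices, first arrow first; paths of   *)
(* length <= qv are enumerated, which gives all paths when the quiver  *)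
(* is acyclic (as are all quivers used below).                         *)
Record quiver := Quiver { qv : nat; qa : seq (nat * nat) }.

Definition qarr (Q : quiver) := 'I_(size (qa Q)).
Definition qsrc (Q : quiver) (a : qarr Q) : nat := (nth (0%N, 0%N) (qa Q) a).1.
Definition qtgt (Q : quiver) (a : qarr Q) : nat := (nth (0%N, 0%N) (qa Q) a).2.

Fixpoint isPath (Q : quiver) (x y : nat) (p : seq (qarr Q)) : bool :=
  match p with
  | [::] => x == y
  | a :: p' => (qsrc a == x) && isPath (qtgt a) y p'
  end.

Fixpoint allseqs (T : finType) (m : nat) : seq (seq T) :=
  match m with
  | 0 => [:: [::]]
  | m'.+1 => [::] :: [seq a :: s | a <- enum T, s <- allseqs T m']
  end.

Definition qpaths (Q : quiver) (x y : nat) : seq (seq (qarr Q)) :=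
  [seq p <- undup (@allseqs (qarr Q) (qv Q)) | @isPath Q x y p].

Definition pathCat (K : fieldType) (Q : quiver) : linCat K :=
  @LinCat K 'I_(qv Q)
    (fun x y => size (qpaths Q x y))
    (fun x y z g f => \row_(k < size (qpaths Q x z))
        \sum_(i < size (qpaths Q y z)) \sum_(j < size (qpaths Q x y))
          ((nth [::] (qpaths Q x y) j ++ nth [::] (qpaths Q y z) i
             == nth [::] (qpaths Q x z) k)%:R * (g 0 i * f 0 j)))
    (fun x => \row_(k < size (qpaths Q x x))
        ((nth [::] (qpaths Q x x) k == [::])%:R)).

Definition quiverA1 := Quiver 1 [::].
Definition quiverA2 := Quiver 2 [:: (0,1)]%N.
Definition quiverA3in := Quiver 3 [:: (0,1); (2,1)]%N.
Definition quiverA3out := Quiver 3 [:: (1,0); (1,2)]%N.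
Definition quiverA4 := Quiver 4 [:: (0,1); (2,1); (2,3)]%N.

From HB Require Import structures.
From mathcomp Require Import all_boot all_order all_algebra.
From mathcomp Require Import zify.
Set Implicit Arguments. Unset Strict Implicit. Unset Printing Implicit Defensive.
Import GRing.Theory.

(* Paths of G_{2,n} realise exactly the componentwise order, so for a convex I
   the sources and sinks of I are its minimal and maximal vertices.  Minimal
   vertices in the same row are comparable, hence equal, so I has one minimum
   or two (one in each row), and dually for maxima.  Two distinct extremal
   vertices can only be related as a minimum below a maximum, and when both
   rows carry a minimum and a maximum, connectedness of I yields a vertical
   arrow inside I, which puts the top minimum below the bottom maximum.  This
   leaves the five posets A1, A2, A3 (two orientations) and the zigzag A4.
   Finally, C^ss_I and the path categories of these quivers are thin (Hom
   spaces of dimension at most one, composition by multiplication of scalars),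
   so a bijection on objects matching the Hom dimensions is an isomorphism. *)

Section FiniteOrder.
Variables (T : finType) (le : rel T).
Implicit Types (A : {set T}) (m x : T).

Definition minimal (A : {set T}) (m : T) : bool :=
  (m \in A) && [forall x in A, le x m ==> (x == m)].

Definition least (A : {set T}) (m : T) : Prop := m \in A /\ {in A, forall x, le m x}.

Lemma minimalP A m : reflect (m \in A /\ {in A, forall x, le x m -> x = m}) (minimal A m).
Proof.
apply: (iffP andP) => -[mA min_m]; split=> //.
  by move=> x xA le_xm; apply/eqP; move/forall_inP/(_ x xA)/implyP: min_m; apply.
by apply/forall_inP => x xA; apply/implyP => /(min_m x xA) ->.
Qed.

Hypotheses (le_refl : reflexive le) (le_trans : transitive le).
Hypothesis le_anti : antisymmetric le.

Lemma exists_minimal A x : x \in A -> exists2 m, minimal A m & le m x.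
Proof.
pose below y := [set z in A | le z y].
move=> xA; have xAx : (x \in A) && le x x by rewrite xA le_refl.
case: (@arg_minnP _ x (fun y => (y \in A) && le y x) (fun y => #|below y|) xAx).
move=> m /andP[mA le_mx] min_m.
exists m => //; apply/minimalP; split=> // y yA le_ym.
have sub_y_m : below y \subset below m.
  by apply/subsetP => z; rewrite !inE => /andP[-> le_zy]; exact: le_trans le_zy le_ym.
have /eqP eq_below : below y == below m.
  by rewrite eqEcard sub_y_m min_m // yA (le_trans le_ym le_mx).
have : m \in below y by rewrite eq_below !inE mA le_refl.
by rewrite inE => /andP[_ le_my]; apply: le_anti; rewrite le_ym le_my.
Qed.

Lemma minimal_comparable A m m' :
  minimal A m -> minimal A m' -> le m m' || le m' m -> m = m'.
Proof.
move=> /minimalP[mA min_m] /minimalP[m'A min_m'] /orP[le_mm' | le_m'm].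
  exact: min_m'.
exact/esym/min_m.
Qed.

Lemma least_minimalE A m : least A m -> forall v, minimal A v = (v == m).
Proof.
case=> mA least_m v; apply/idP/eqP => [/minimalP[vA min_v] | ->].
  by apply/esym/min_v; last exact: least_m.
by apply/minimalP; split=> // x xA le_xm; apply: le_anti; rewrite le_xm least_m.
Qed.

End FiniteOrder.

Section ConnectSteps.
Variables (T : finType) (e : rel T).

Lemma connect_first_step x y : connect e x y -> x != y -> exists2 z, e x z & connect e z y.
Proof.
case/connectP => -[_ -> | z p /= /andP[e_xz pth] ->]; first by rewrite eqxx.
by exists z => //; apply: (path_connect pth); rewrite mem_last.
Qed.

Lemma connect_last_step x y : connect e x y -> x != y -> exists2 z, connect e x z & e z y.
Proof.
case/connectP => p + ->; case/lastP: p => [|p z] /=; first by rewrite eqxx.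
rewrite rcons_path last_rcons => /andP[pth e_z] _.
by exists (last x p) => //; apply: (path_connect pth); rewrite mem_last.
Qed.

Lemma connect_exit (P : pred T) x y :
  connect e x y -> P x -> ~~ P y -> exists a b, [/\ e a b, P a & ~~ P b].
Proof.
case/connectP => p + ->; elim: p x => [|z p IHp] x /=; first by move=> _ ->.
case/andP => e_xz pth Px; case Pz: (P z); first exact: IHp.
by move=> _; exists x, z; rewrite Pz.
Qed.

End ConnectSteps.

Definition gle {n} (x y : gvert n) : bool := (x.1 <= y.1)%N && (x.2 <= y.2)%N.
Definition gge {n} (x y : gvert n) : bool := gle y x.

Section GridOrder.
Context {n : nat}.
Implicit Types x y z : gvert n.

Lemma gle_refl : reflexive (@gle n).
Proof. by move=> x; rewrite /gle !leqnn. Qed.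

Lemma gle_trans : transitive (@gle n).
Proof. by move=> y x z; rewrite /gle; lia. Qed.

Lemma gle_anti : antisymmetric (@gle n).
Proof.
move=> [i j] [i' j']; rewrite /gle /= => le_ij.
by congr (_, _); apply: ord_inj; lia.
Qed.

Lemma gge_refl : reflexive (@gge n).
Proof. exact: gle_refl. Qed.

Lemma gge_trans : transitive (@gge n).
Proof. by move=> y x z le_yx le_zy; exact: gle_trans le_zy le_yx. Qed.

Lemma gge_anti : antisymmetric (@gge n).
Proof. by move=> x y; rewrite andbC; exact: gle_anti. Qed.

Lemma gle_row_total x y : x.1 = y.1 -> gle x y || gle y x.
Proof. by rewrite /gle => ->; rewrite leqnn /=; lia. Qed.

Lemma gge_row_total x y : x.1 = y.1 -> gge x y || gge y x.
Proof. by move/gle_row_total; rewrite orbC. Qed.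

Lemma gle_row x y : gle x y -> (x.1 <= y.1)%N.
Proof. by case/andP. Qed.

Lemma gle_rowF x y : x.1 = 1 :> nat -> y.1 = 0 :> nat -> gle x y = false.
Proof. by rewrite /gle => -> ->. Qed.

Lemma garrE x y : garr x y =
  ((x.1 == y.1 :> nat) && (y.2 == (x.2).+1 :> nat)) ||
  (x.1 == 0 :> nat) && (y.1 == 1 :> nat) && (x.2 == y.2 :> nat).
Proof. by []. Qed.

Lemma garr_gle x y : garr x y -> gle x y.
Proof. by rewrite garrE /gle; lia. Qed.

Lemma garr_neq x y : garr x y -> x != y.
Proof. by rewrite garrE; apply: contraTneq => ->; lia. Qed.

Lemma gpath_row (i : 'I_2) (j k : 'I_n) : (j <= k)%N -> gpath (i, j) (i, k).
Proof.
case: k => k lt_kn /=; elim: k lt_kn => [|k IHk] lt_kn le_jk.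
  by apply: eq_connect0; congr (_, _); apply: ord_inj => /=; lia.
have [eq_jk | le_jk'] : j = k.+1 :> nat \/ (j <= k)%N by lia.
  by apply: eq_connect0; congr (_, _); apply: ord_inj.
apply: connect_trans (IHk (ltnW lt_kn) le_jk') (connect1 _).
by rewrite garrE /= !eqxx.
Qed.

Lemma gpathE x y : gpath x y = gle x y.
Proof.
apply/idP/idP.
  case/connectP => p pth ->; have := order_path_min gle_trans (sub_path garr_gle pth).
  by move/allP => le_xp; case/predU1P: (mem_last x p) => [-> | /le_xp //]; rewrite gle_refl.
case: x y => [i j] [i' j'] /andP[/= le_ii' le_jj'].
have [-> | /andP[i0 i'1]] : i = i' \/ (i == 0 :> nat) && (i' == 1 :> nat).
  have := ltn_ord i'; case: (ltngtP i i') => [|| /ord_inj ->]; [right; lia | lia | by left].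
  exact: gpath_row le_jj'.
apply: connect_trans (gpath_row i le_jj') (connect1 _).
by rewrite garrE /= i0 i'1 eqxx orbT.
Qed.

End GridOrder.

Lemma ord2_other (i j k : 'I_2) : i != j -> k = i \/ k = j.
Proof.
case: i j k => [[|[|i]] ?] [[|[|j]] ?] [[|[|k]] ?] //= _;
  by [left; apply: ord_inj | right; apply: ord_inj].
Qed.

Section GridExtremal.
Variables (n : nat) (le : rel (gvert n)).
Hypotheses (le_refl : reflexive le) (le_trans : transitive le) (le_anti : antisymmetric le).
Hypothesis le_row_total : forall x y : gvert n, x.1 = y.1 -> le x y || le y x.
Implicit Types (A : {set gvert n}) (x m : gvert n).

Definition minimal_pair A m0 m1 : Prop :=
  [/\ minimal le A m0, minimal le A m1, m0.1 = 0 :> nat, m1.1 = 1 :> nat &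
      {in A, forall x, le m0 x || le m1 x}].

Lemma minimal_row_eq A m m' : minimal le A m -> minimal le A m' -> m.1 = m'.1 -> m = m'.
Proof. by move=> min_m min_m' /le_row_total; exact: minimal_comparable min_m min_m'. Qed.

Lemma minimal_pairE A m0 m1 :
  minimal_pair A m0 m1 -> forall v, minimal le A v = (v == m0) || (v == m1).
Proof.
case=> min0 min1 _ _ cover v; apply/idP/idP => [min_v | /orP[]/eqP-> //].
have /minimalP[vA _] := min_v.
case/orP: (cover v vA) => le_mv.
  by rewrite (minimal_comparable min0 min_v) ?le_mv ?eqxx.
by rewrite (minimal_comparable min1 min_v) ?le_mv ?eqxx ?orbT.
Qed.

Lemma minimal_pair_leF A m0 m1 :
  minimal_pair A m0 m1 -> le m0 m1 = false /\ le m1 m0 = false.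
Proof.
case=> min0 min1 row0 row1 _.
have ne01 : m0 != m1 by apply/eqP => eq01; move: row0; rewrite eq01 row1.
split; apply: contraNF ne01 => le_m.
  by apply/eqP/(minimal_comparable min0 min1); rewrite le_m.
by apply/eqP/(minimal_comparable min0 min1); rewrite le_m orbT.
Qed.

Lemma minimal_cases A :
  A != set0 -> (exists m, least le A m) \/ (exists m0 m1, minimal_pair A m0 m1).
Proof.
case/set0Pn => a aA.
have [m0 min0 _] := exists_minimal le_refl le_trans le_anti aA.
have /minimalP[m0A _] := min0.
have [least0 | /forall_inPn[b bA not_le0b]] := boolP [forall x in A, le m0 x].
  by left; exists m0; split=> // x xA; move/forall_inP: least0; apply.
right; have [m1 min1 le1b] := exists_minimal le_refl le_trans le_anti bA.
have rows01 : m0.1 != m1.1.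
  by apply: contraNneq not_le0b => /(minimal_row_eq min0 min1) ->.
have cover : {in A, forall x, le m0 x || le m1 x}.
  move=> x xA; have [m min_m le_mx] := exists_minimal le_refl le_trans le_anti xA.
  by case: (ord2_other m.1 rows01) => /(minimal_row_eq min_m) => [min0_eq | min1_eq];
    [rewrite -(min0_eq min0) le_mx | rewrite -(min1_eq min1) le_mx orbT].
have := ltn_ord m0.1; have := ltn_ord m1.1; move: rows01; rewrite -val_eqE /=.
case E0: (m0.1 : nat) => [|[|//]]; case E1: (m1.1 : nat) => [|[|//]] //= _ _ _.
  by exists m0, m1.
by exists m1, m0; split=> // x /cover; rewrite orbC.
Qed.

End GridExtremal.

Section Interval.
Variables (n : nat) (I : {set gvert n}).
Hypothesis I_interval : is_interval I.
Implicit Types (u v x y z : gvert n).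

Lemma interval_convex x y z : x \in I -> y \in I -> gle x z -> gle z y -> z \in I.
Proof. by case: I_interval => _ _ conv xI yI; rewrite -!gpathE; apply: conv. Qed.

Lemma is_source_minimal v : v \in I -> is_source I v = minimal gle I v.
Proof.
move=> vI; apply/forall_inP/minimalP => [src | [_ min_v] u uI].
  split=> // u uI le_uv; apply/eqP/negPn/negP => ne_uv.
  have [w uw wv] := connect_last_step (etrans (gpathE u v) le_uv) ne_uv.
  have wI : w \in I by apply: interval_convex uI vI _ (garr_gle wv); rewrite -gpathE.
  by have := src w wI; rewrite wv.
by apply/negP => uv; have := garr_neq uv; rewrite (min_v u uI (garr_gle uv)) eqxx.
Qed.

Lemma is_sink_maximal v : v \in I -> is_sink I v = minimal gge I v.
Proof.
move=> vI; apply/forall_inP/minimalP => [snk | [_ max_v] u uI].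
  split=> // u uI le_vu; apply/eqP/negPn/negP; rewrite eq_sym => ne_vu.
  have [w vw wu] := connect_first_step (etrans (gpathE v u) le_vu) ne_vu.
  have wI : w \in I by apply: interval_convex vI uI (garr_gle vw) _; rewrite -gpathE.
  by have := snk w wI; rewrite vw.
by apply/negP => vu; have := garr_neq vu; rewrite (max_v u uI (garr_gle vu)) eqxx.
Qed.

Lemma mem_Iss v : (v \in Iss I) = minimal gle I v || minimal gge I v.
Proof.
rewrite inE; have [vI | vNI] := boolP (v \in I).
  by rewrite is_source_minimal ?is_sink_maximal.
by rewrite /minimal (negbTE vNI).
Qed.

Lemma top_min_le_bottom_max pt pb qt qb :
  minimal_pair gle I pt pb -> minimal_pair gge I qt qb -> gle pt qb.
Proof.
case=> /minimalP[ptI _] /minimalP[pbI _] pt0 pb1 above.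
case=> _ _ qt0 qb1 below; case: I_interval => _ conn _.
(* Some edge of I leaves the top row; it is a vertical arrow a -> b, and pt <= a <= b <= qb. *)
have [a [b [/and3P[aI bI ab] /eqP a0]]] : exists a b : gvert n,
    [/\ [&& a \in I, b \in I & garr a b || garr b a], a.1 == 0 :> nat & b.1 != 0 :> nat].
  apply: (@connect_exit _ _ (fun v => v.1 == 0 :> nat)) (conn _ _ ptI pbI) _ _;
    by rewrite ?pt0 ?pb1.
rewrite -lt0n => b1; have {}b1 : b.1 = 1 :> nat by have := ltn_ord b.1; lia.
have le_ab : gle a b by case/orP: ab => [/garr_gle // | /garr_gle]; rewrite gle_rowF.
have pt_a : gle pt a by case/orP: (above a aI) => // /gle_row; lia.
have b_qb : gle b qb by case/orP: (below b bI) => // /gle_row; lia.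
exact: gle_trans pt_a (gle_trans le_ab b_qb).
Qed.

End Interval.

Section ThinCategories.
Variable K : fieldType.
Local Open Scope ring_scope.

Definition mxsum m (u : 'rV[K]_m) : K := \sum_(i < m) u 0 i.

Definition thin (C : linCat K) : Prop :=
  [/\ forall x y : obj C, (dim x y <= 1)%N,
      forall (x y z : obj C) (g : 'rV[K]_(dim y z)) (f : 'rV[K]_(dim x y)),
        comp g f = const_mx (mxsum g * mxsum f) &
      forall x : obj C, idm x = const_mx 1].

Lemma mxsum_const m (c : K) : mxsum (const_mx c : 'rV_m) = c *+ m.
Proof. by rewrite /mxsum (eq_bigr (fun=> c)) ?sumr_const ?card_ord // => i _; rewrite mxE. Qed.

Lemma mxsum_linear m a (u v : 'rV[K]_m) : mxsum (a *: u + v) = a * mxsum u + mxsum v.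
Proof. by rewrite /mxsum mulr_sumr -big_split; apply: eq_bigr => i _; rewrite !mxE. Qed.

Lemma const_mx_mulrn m m' (c : K) :
  (m' <= 1)%N -> m = m' -> (const_mx (c *+ m) : 'rV_m') = const_mx c.
Proof. by move=> + ->; case: m' => [|[|//]] _; [apply/matrixP => ? [] | rewrite mulr1n]. Qed.

Lemma const_mx_mxsum m (u : 'rV[K]_m) : (m <= 1)%N -> const_mx (mxsum u) = u.
Proof.
case: m u => [|[|//]] u _; apply/matrixP => i j; first by case: j.
by rewrite mxE /mxsum big_ord1 !ord1.
Qed.

Lemma mxsum_const_mxsum m m' (u : 'rV[K]_m) :
  (m <= 1)%N -> m' = m -> mxsum (const_mx (mxsum u) : 'rV_m') = mxsum u.
Proof.
move=> le_m1 ->; rewrite mxsum_const.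
by case: m u le_m1 => [|[|//]] u _; rewrite ?mulr1n // /mxsum big_ord0.
Qed.

Lemma thin_cat_iso (C D : linCat K) (phi : obj C -> obj D) :
  bijective phi -> thin C -> thin D -> (forall x y, dim (phi x) (phi y) = dim x y) ->
  cat_iso C D.
Proof.
move=> bij_phi [dimC compC idC] [dimD compD idD] dim_phi; exists phi; split=> //.
pose F x y (u : 'rV[K]_(dim x y)) : 'rV[K]_(dim (phi x) (phi y)) := const_mx (mxsum u).
have FK x y u : mxsum (F x y u) = mxsum u by apply: mxsum_const_mxsum.
exists F; split.
- move=> x y; exists (fun v => const_mx (mxsum v)) => [u | v].
    by rewrite FK const_mx_mxsum.
  by rewrite /F mxsum_const_mxsum ?dim_phi // const_mx_mxsum.
- by move=> x y a u v; rewrite /F mxsum_linear; apply/matrixP => i j; rewrite !mxE.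
- move=> x y z g f; rewrite compC compD !FK /F mxsum_const.
  exact: const_mx_mulrn (dimD _ _) (esym (dim_phi x z)).
- move=> x; rewrite idC idD /F mxsum_const.
  exact: const_mx_mulrn (dimD _ _) (esym (dim_phi x x)).
Qed.

Lemma thin_Css n (I : {set gvert n}) : thin (Css K I).
Proof.
split=> //= [x y | x y z g f]; first by case: gpath.
by apply/matrixP => i k; rewrite !mxE /mxsum mulr_suml; apply: eq_bigr => a _; rewrite mulr_sumr.
Qed.

End ThinCategories.

(* For quivers without paths of length two, such as the five above, this is
   reachability.  It is phrased with [has] so that [/=] evaluates it. *)
Definition qadj (Q : quiver) (x y : nat) : bool :=
  (x == y) || has (fun a => (a.1 == x) && (a.2 == y)) (qa Q).

Definition qthin (Q : quiver) : bool :=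
  all (fun x => all (fun y => (size (qpaths Q x y) == qadj Q x y) &&
    all (fun z => qadj Q x y ==> qadj Q y z ==>
      (nth [::] (qpaths Q x y) 0 ++ nth [::] (qpaths Q y z) 0 == nth [::] (qpaths Q x z) 0))
    (iota 0 (qv Q))) (iota 0 (qv Q))) (iota 0 (qv Q)).

Section ThinQuiver.
Variables (Q : quiver) (thinQ : qthin Q).
Implicit Types x y z : 'I_(qv Q).

Let path0 x y := nth [::] (qpaths Q x y) 0.

Lemma qthinP x y z :
  size (qpaths Q x y) = qadj Q x y /\
  (qadj Q x y -> qadj Q y z -> path0 x y ++ path0 y z = path0 x z).
Proof.
have mem_V (w : 'I_(qv Q)) : (w : nat) \in iota 0 (qv Q) by rewrite mem_iota add0n ltn_ord.
move: thinQ; rewrite /qthin => /allP/(_ x (mem_V x))/allP/(_ y (mem_V y)).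
case/andP => /eqP sz /allP/(_ z (mem_V z)) cat_xyz; split=> // xy yz.
by apply/eqP; move: cat_xyz; rewrite xy yz.
Qed.

Lemma size_qpaths x y : size (qpaths Q x y) = qadj Q x y.
Proof. exact: (qthinP x y x).1. Qed.

Lemma qpaths_cat x y z : qadj Q x y -> qadj Q y z -> path0 x y ++ path0 y z = path0 x z.
Proof. exact: (qthinP x y z).2. Qed.

Lemma qpaths_id x : path0 x x = [::].
Proof.
have /(congr1 size) := @qpaths_cat x x x (predU1l _ erefl) (predU1l _ erefl).
by rewrite size_cat => sz; apply/size0nil; lia.
Qed.

Lemma qadj_anti x y : qadj Q x y -> qadj Q y x -> x = y.
Proof.
move=> xy yx; have := congr1 (@nilp _) (@qpaths_cat x y x xy yx).
rewrite qpaths_id cat_nilp => /andP[/nilP nil_xy _].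
have : path0 x y \in qpaths Q x y by rewrite mem_nth // size_qpaths xy.
by rewrite mem_filter nil_xy => /andP[/eqP/ord_inj].
Qed.

Lemma qpaths_index x y (i : 'I_(size (qpaths Q x y))) : i = 0 :> nat /\ qadj Q x y.
Proof. by case: i => /= i; rewrite size_qpaths; case: qadj => //; rewrite ltnS leqn0 => /eqP. Qed.

Lemma thin_pathCat (K : fieldType) : thin (pathCat K Q).
Proof.
split=> /= [x y | x y z g f | x]; first by rewrite size_qpaths; case: qadj.
  apply/matrixP => i k; rewrite !mxE /mxsum mulr_suml; apply: eq_bigr => a _.
  rewrite mulr_sumr; apply: eq_bigr => b _.
  have [-> yz] := qpaths_index a; have [-> xy] := qpaths_index b; have [-> _] := qpaths_index k.
  by rewrite (qpaths_cat xy yz) eqxx mul1r.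
apply/matrixP => i k; rewrite !mxE; have [-> _] := qpaths_index k.
by rewrite [nth _ _ _]qpaths_id.
Qed.

End ThinQuiver.

(* [enum 'I_m] does not evaluate (it goes through opaque proofs in [insub]);
   [enum_ordSl] first rewrites it into a list of closed ordinals. *)
Lemma qthin_A1 : qthin quiverA1.
Proof. by rewrite /qthin /qpaths /= enum_ord0; vm_compute. Qed.

Lemma qthin_A2 : qthin quiverA2.
Proof. by rewrite /qthin /qpaths /= !enum_ordSl enum_ord0; vm_compute. Qed.

Lemma qthin_A3in : qthin quiverA3in.
Proof. by rewrite /qthin /qpaths /= !enum_ordSl enum_ord0; vm_compute. Qed.

Lemma qthin_A3out : qthin quiverA3out.
Proof. by rewrite /qthin /qpaths /= !enum_ordSl enum_ord0; vm_compute. Qed.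

Lemma qthin_A4 : qthin quiverA4.
Proof. by rewrite /qthin /qpaths /= !enum_ordSl enum_ord0; vm_compute. Qed.

Section Classification.
Variables (K : fieldType) (n : nat) (I : {set gvert n}).
Hypothesis I_interval : is_interval I.

Lemma Css_iso_pathCat (Q : quiver) (vs : (qv Q).-tuple (gvert n)) :
  qthin Q -> Iss I =i vs ->
  (forall i j : 'I_(qv Q), gle (tnth vs i) (tnth vs j) = qadj Q i j) ->
  cat_iso (Css K I) (pathCat K Q).
Proof.
move=> thinQ Iss_vs le_vs.
have /tuple_uniqP uniq_vs : injective (tnth vs).
  by move=> i j eq_ij; apply: (qadj_anti thinQ); rewrite -le_vs eq_ij gle_refl.
have index_lt (x : obj (Css K I)) : (index (val x) vs < qv Q)%N.
  by have := index_mem (val x) vs; rewrite size_tuple -Iss_vs (valP x).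
pose phi x : obj (pathCat K Q) := Ordinal (index_lt x).
have tnth_phi x : tnth vs (phi x) = val x.
  by rewrite (tnth_nth (val x)) nth_index // -Iss_vs (valP x).
have tnth_Iss i : tnth vs i \in Iss I by rewrite Iss_vs mem_tnth.
apply: (thin_cat_iso (phi := phi)); [| exact: thin_Css | exact: thin_pathCat | ].
  exists (fun i => exist _ (tnth vs i) (tnth_Iss i)) => [x | i]; apply: val_inj => /=.
    exact: tnth_phi.
  by rewrite (tnth_nth (tnth vs i)) index_uniq ?size_tuple.
by move=> x y; rewrite /= (size_qpaths thinQ (phi x) (phi y)) -le_vs !tnth_phi gpathE.
Qed.

Lemma Css_iso_A1_A2 (p q : gvert n) : least gle I p -> least gge I q ->
  cat_iso (Css K I) (pathCat K quiverA1) \/ cat_iso (Css K I) (pathCat K quiverA2).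
Proof.
move=> least_p least_q.
have Iss_pq v : (v \in Iss I) = (v == p) || (v == q).
  by rewrite mem_Iss // (least_minimalE gle_anti least_p) (least_minimalE gge_anti least_q).
have [[pI le_p] [qI _]] := (least_p, least_q).
have [eq_pq | ne_pq] := eqVneq p q.
  left; apply: (@Css_iso_pathCat quiverA1 [tuple p] qthin_A1) => [v | ].
    by rewrite Iss_pq -eq_pq orbb !inE.
  by move=> [[|i] ?] [[|j] ?] //=; rewrite !(tnth_nth p) gle_refl.
right; apply: (@Css_iso_pathCat quiverA2 [tuple p; q] qthin_A2) => [v | ].
  by rewrite Iss_pq !inE.
have q_pF : gle q p = false.
  by apply: contraNF ne_pq => le_qp; apply/eqP/gle_anti; rewrite le_qp le_p.
by move=> [[|[|i]] ?] [[|[|j]] ?] //=; rewrite !(tnth_nth p) /qadj /= ?gle_refl ?le_p.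
Qed.

Lemma Css_iso_A3in (pt pb q : gvert n) : minimal_pair gle I pt pb -> least gge I q ->
  cat_iso (Css K I) (pathCat K quiverA3in).
Proof.
move=> mins least_q; have [min_pt min_pb _ _ _] := mins.
have [qI le_q] : q \in I /\ {in I, forall x, gle x q} := least_q.
have [/minimalP[ptI _] /minimalP[pbI _]] := (min_pt, min_pb).
have [pt_pbF pb_ptF] := minimal_pair_leF mins.
have q_ptF : gle q pt = false by apply: contraFF pb_ptF; apply: gle_trans (le_q pb pbI).
have q_pbF : gle q pb = false by apply: contraFF pt_pbF; apply: gle_trans (le_q pt ptI).
apply: (@Css_iso_pathCat quiverA3in [tuple pt; q; pb] qthin_A3in) => [v | ].
  rewrite mem_Iss // (minimal_pairE mins) (least_minimalE gge_anti least_q) !inE.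
  by case: (v == pt); case: (v == pb); case: (v == q).
by move=> [[|[|[|i]]] ?] [[|[|[|j]]] ?] //=;
  rewrite !(tnth_nth q) /qadj /= ?gle_refl ?le_q.
Qed.

Lemma Css_iso_A3out (p qt qb : gvert n) : least gle I p -> minimal_pair gge I qt qb ->
  cat_iso (Css K I) (pathCat K quiverA3out).
Proof.
move=> least_p maxs; have [[pI le_p] [max_qt max_qb _ _ _]] := (least_p, maxs).
have [/minimalP[qtI _] /minimalP[qbI _]] := (max_qt, max_qb).
have [qb_qtF qt_qbF] := minimal_pair_leF maxs.
have qt_pF : gle qt p = false by apply: contraFF qt_qbF => /gle_trans; apply; exact: le_p.
have qb_pF : gle qb p = false by apply: contraFF qb_qtF => /gle_trans; apply; exact: le_p.
apply: (@Css_iso_pathCat quiverA3out [tuple qt; p; qb] qthin_A3out) => [v | ].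
  rewrite mem_Iss // (least_minimalE gle_anti least_p) (minimal_pairE maxs) !inE.
  by case: (v == p); case: (v == qt); case: (v == qb).
by move=> [[|[|[|i]]] ?] [[|[|[|j]]] ?] //=;
  rewrite !(tnth_nth p) /qadj /= ?gle_refl ?le_p.
Qed.

Lemma Css_iso_A4 (pt pb qt qb : gvert n) : minimal_pair gle I pt pb -> minimal_pair gge I qt qb ->
  cat_iso (Css K I) (pathCat K quiverA4).
Proof.
move=> mins maxs; have pt_qb := top_min_le_bottom_max I_interval mins maxs.
have [[_ min_pb pt0 pb1 above] [max_qt _ qt0 qb1 below]] := (mins, maxs).
have [/minimalP[pbI _] /minimalP[qtI _]] := (min_pb, max_qt).
have [pt_pbF _] := minimal_pair_leF mins.
have [_ qt_qbF] := minimal_pair_leF maxs.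
have pt_qt : gle pt qt by case/orP: (above qt qtI); rewrite // gle_rowF.
have pb_qb : gle pb qb by case/orP: (below pb pbI); rewrite // /gge gle_rowF.
have qb_pbF : gle qb pb = false by apply: contraFF pt_pbF; apply: gle_trans pt_qb.
have qt_ptF : gle qt pt = false by apply: contraFF qt_qbF => /gle_trans; apply.
have qt_pbF : gle qt pb = false by apply: contraFF pt_pbF; apply: gle_trans pt_qt.
apply: (@Css_iso_pathCat quiverA4 [tuple pb; qb; pt; qt] qthin_A4) => [v | ].
  rewrite mem_Iss // (minimal_pairE mins) (minimal_pairE maxs) !inE.
  by case: (v == pt); case: (v == pb); case: (v == qt); case: (v == qb).
(* The pairs left after the facts above go from the bottom row to the top row. *)
by move=> [[|[|[|[|i]]]] ?] [[|[|[|[|j]]]] ?] //=;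
  rewrite !(tnth_nth pt) /qadj /= ?gle_refl // /gle ?pt0 ?pb1 ?qt0 ?qb1.
Qed.

End Classification.

Theorem mainTheorem19 (K : fieldType) (n : nat) (I : {set gvert n}) :
  is_interval I ->
  cat_iso (Css K I) (pathCat K quiverA1) \/
  cat_iso (Css K I) (pathCat K quiverA2) \/
  cat_iso (Css K I) (pathCat K quiverA3in) \/
  cat_iso (Css K I) (pathCat K quiverA3out) \/
  cat_iso (Css K I) (pathCat K quiverA4).
Proof.
move=> I_interval; have [I0 _ _] := I_interval.
have mins_cases := minimal_cases gle_refl gle_trans gle_anti gle_row_total I0.
have maxs_cases := minimal_cases gge_refl gge_trans gge_anti gge_row_total I0.
case: mins_cases => [[p least_p] | [pt [pb mins]]];
  case: maxs_cases => [[q least_q] | [qt [qb maxs]]].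
- by case: (Css_iso_A1_A2 K I_interval least_p least_q); [left | right; left].
- by do 3 right; left; apply: Css_iso_A3out least_p maxs.
- by do 2 right; left; apply: Css_iso_A3in mins least_q.
- by do 4 right; apply: Css_iso_A4 mins maxs.
Qed.
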